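(* Let $T$ and $k$ be positive integers and let $p_1,\dots,p_k\in(0,1]$, with $q_i=1-p_i$. Consider blocks $i=1,\dots,k$, each of $T$ slots. In block $i$ the slot success indicators are i.i.d. Bernoulli$(p_i)$, and the blocks are independent. Block $0$ is a virtual block that is always successful; accordingly set $q_0=0$. Let $Z(i)$ indicate that block $i$ contains at least one success. On the event $Z(k)=1$, define the following quantities: - $\kappa\in\{1,\dots,k\}$, such that $k-\kappa$ is the most recent block before $k$ with $Z(k-\kappa)=1$; - $X_k$, the number of failure slots before the first success in block $k$. The peak age of information of the first successfully received input in block $k$ is $$\Delta^{\rm P}_{\kappa,k}=\kappa T+X_k+1.$$ Then $$\Theta^{\rm pa}_k:=\mathbb{E}[\Delta^{\rm P}_{\kappa,k}\mid Z(k)=1]=T\sum_{\kappa=1}^{k}\kappa(1-q_{k-\kappa}^T)\prod_{i=k-\kappa+1}^{k-1}q_i^T+\Big(\frac{q_k}{p_k}-\frac{Tq_k^T}{1-q_k^T}\Big)+1.$$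
   Context: Empty products equal $1$. The block-$0$ convention means block $0$ is always treated as a successful block, so $\kappa=k$ corresponds to no successful block among $1,\dots,k-1$. *)

(* finite discrete probability over the product space of slot outcomes. *)
From mathcomp Require Import all_boot all_order all_algebra.
Set Implicit Arguments. Unset Strict Implicit. Unset Printing Implicit Defensive.
Import Order.TTheory GRing.Theory Num.Theory.
Local Open Scope ring_scope.

(* An outcome: for each real block j : 'I_k (representing block j+1) and each
   slot t : 'I_T, whether slot t of that block is a success. *)
Definition outcome (k T : nat) := {ffun 'I_k -> {ffun 'I_T -> bool}}.

Definition qq {R : ringType} (p : nat -> R) (i : nat) : R :=
  if i == 0%N then 0 else 1 - p i.

Definition prob {R : ringType} (k T : nat) (p : nat -> R) (w : outcome k T) : R :=
  \prod_(j < k) \prod_(t < T) (if w j t then p j.+1 else 1 - p j.+1).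

Definition Z (k T : nat) (w : outcome k T) (i : nat) : bool :=
  if i is i'.+1 then
    (if insub i' is Some j then [exists t, w j t] else false)
  else true.

Definition kappa (k T : nat) (w : outcome k T) : nat :=
  (find (fun m => Z w (k - m)) (iota 1 k)).+1.

Definition Xk (k T : nat) (w : outcome k T) : nat :=
  if insub k.-1 is Some j then find (fun t : 'I_T => w j t) (enum 'I_T) else 0%N.

Definition peakAoI (k T : nat) (w : outcome k T) : nat :=
  (kappa w * T + Xk w + 1)%N.

Definition Theta_pa {R : fieldType} (k T : nat) (p : nat -> R) : R :=
  (\sum_(w : outcome k T | Z w k) prob p w * (peakAoI w)%:R)
  / (\sum_(w : outcome k T | Z w k) prob p w).

From mathcomp Require Import all_boot all_order all_algebra.
From mathcomp Require Import zify ring.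
Set Implicit Arguments. Unset Strict Implicit. Unset Printing Implicit Defensive.
Import Order.TTheory GRing.Theory Num.Theory.
Local Open Scope ring_scope.

(* Every slot of every block is an independent coin, so an event that constrains
   each block separately has the product of the block probabilities as its
   probability.  On [Z k = 1], the event [kappa = m] is such an event: blocks [k]
   and [k - m] succeed and the blocks strictly between them fail; summing [m]
   against these products gives the first term.  In block [k] itself,
   [X_k 1{Z k}] is the sum over [x < T] of [1{X_k > x} - 1{Z k = 0}], and
   [P(X_k > x) = q_k^(x+1)], so its mean is a geometric sum.  Dividing by
   [P(Z k = 1) = 1 - q_k^T] gives the formula. *)

Lemma find_eq_nth (X : eqType) (a : pred X) (s : seq X) x0 i : (i < size s)%N ->
  (find a s == i) = a (nth x0 s i) && all (fun j => ~~ a (nth x0 s j)) (iota 0 i).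
Proof.
move=> i_lt; apply/eqP/andP => [find_i | [a_i /allP none_before]].
  rewrite -find_i; split; first by apply: nth_find; rewrite has_find find_i.
  by apply/allP => j; rewrite mem_iota add0n => /andP[_ j_lt]; rewrite before_find.
have has_a : has a s by apply/hasP; exists (nth x0 s i) => //; exact: mem_nth.
case: (ltngtP (find a s) i) => // [find_lt | find_gt].
  by have := none_before (find a s); rewrite mem_iota add0n find_lt (nth_find _ has_a) => /(_ isT).
by rewrite before_find in a_i.
Qed.

Section BigopFacts.
Context {R : comNzRingType}.

Lemma prod_indicator (I : finType) (c : pred I) :
  \prod_(i : I) ((c i)%:R : R) = [forall i, c i]%:R.
Proof.
case: (boolP [forall i, c i]) => [/forallP c_all | /forallPn [i /negbTE ci]].
  by rewrite big1 // => i _; rewrite c_all.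
by rewrite (bigD1 i) //= ci mul0r.
Qed.

Lemma sum_mkcond_indicator (I : finType) (P : pred I) (f : I -> R) :
  \sum_(i | P i) f i = \sum_i f i * (P i)%:R.
Proof. by rewrite big_mkcond; apply: eq_bigr => i _; rewrite mulr_natr mulrb. Qed.

Lemma natr_sum_indicator (n N : nat) : (1 <= n <= N)%N ->
  n%:R = \sum_(1 <= m < N.+1) m%:R * (n == m)%:R :> R.
Proof.
move=> n_range; rewrite (eq_bigr (fun m => if m == n then n%:R else 0)).
  by rewrite -big_mkcond big_nat1_eq ltnS n_range.
by move=> m _; rewrite eq_sym mulr_natr mulrb; case: eqP => [->|].
Qed.

Lemma prod_ord_leq_const (T x : nat) (c : R) : (x < T)%N ->
  \prod_(t < T) (if (t <= x)%N then c else 1) = c ^+ x.+1.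
Proof.
move=> x_lt_T; rewrite -(big_mkord xpredT (fun t => if (t <= x)%N then c else 1)).
rewrite (big_cat_nat (leq0n x.+1) x_lt_T) /=.
rewrite [X in X * _](eq_big_nat _ _ (F2 := fun=> c)) => [|t /andP[_ /[!ltnS] ->]] //.
rewrite [X in _ * X](eq_big_nat _ _ (F2 := fun=> 1)); last first.
  by move=> t /andP[+ _]; rewrite ltnNge => /negbTE ->.
by rewrite big1_eq mulr1 prodr_const_nat subn0.
Qed.

Lemma geometric_sum (q : R) (n : nat) :
  (1 - q) * \sum_(x < n) q ^+ x.+1 = q * (1 - q ^+ n).
Proof.
under eq_bigr do rewrite exprS.
by rewrite -mulr_sumr -[1 - q ^+ n]opprB subrX1; ring.
Qed.

End BigopFacts.

Definition fits (c : option bool) (s : bool) : bool :=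
  if c is Some s' then s == s' else true.

Definition constraint_prob {R : nzRingType} (fail : R) (c : option bool) : R :=
  if c is Some s then (if s then 1 - fail else fail) else 1.

Section BlockProbability.
Context {R : comNzRingType} {T : nat}.
Implicit Types (r : R) (b : {ffun 'I_T -> bool}).

Definition block_prob r b : R := \prod_(t < T) (if b t then r else 1 - r).
Definition success b := [exists t, b t].
Definition first_success b := find b (enum 'I_T).

Lemma sum_block_prob_fail_on r (P : pred 'I_T) :
  \sum_b block_prob r b * [forall t, P t ==> ~~ b t]%:R
  = \prod_(t < T) (if P t then 1 - r else 1).
Proof.
under eq_bigr do rewrite -(prod_indicator (fun t => P t ==> ~~ _ t)) -big_split /=.
rewrite -(bigA_distr_bigA (fun t (y : bool) => (if y then r else 1 - r) * (P t ==> ~~ y)%:R)).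
apply: eq_bigr => t _; rewrite big_bool /=.
by case: (P t); rewrite /= ?mulr1 ?mulr0 ?add0r // addrC subrK.
Qed.

Lemma sum_block_prob r : \sum_b block_prob r b = 1.
Proof.
have <- : \prod_(t < T) (if pred0 t then 1 - r else 1) = 1 by rewrite big1.
rewrite -(sum_block_prob_fail_on r pred0).
by apply: eq_bigr => b _; rewrite (_ : [forall t, _] = true) ?mulr1 //; apply/forallP.
Qed.

Lemma sum_block_prob_fail r :
  \sum_b block_prob r b * (~~ success b)%:R = (1 - r) ^+ T.
Proof.
under eq_bigr do rewrite negb_exists.
by rewrite (sum_block_prob_fail_on r predT) prodr_const card_ord.
Qed.

Lemma sum_block_prob_success r :
  \sum_b block_prob r b * (success b)%:R = 1 - (1 - r) ^+ T.
Proof.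
rewrite -(sum_block_prob_fail r) -[X in X - _](sum_block_prob r) -sumrB.
by apply: eq_bigr => b _; case: (success b); rewrite ?mulr1 ?mulr0 ?subr0 ?subrr.
Qed.

Lemma ltn_first_success b (x : 'I_T) :
  (x < first_success b)%N = [forall t : 'I_T, (t <= x)%N ==> ~~ b t].
Proof.
apply/idP/forallP => [x_lt t | fail_upto_x].
  apply/implyP => t_le_x.
  by have := before_find t (leq_ltn_trans t_le_x x_lt); rewrite nth_ord_enum => ->.
rewrite ltnNge; apply/negP => first_le_x.
have first_lt_T : (first_success b < T)%N := leq_ltn_trans first_le_x (ltn_ord x).
have := @nth_find _ x b (enum 'I_T); rewrite has_find size_enum_ord => /(_ first_lt_T).
rewrite (nth_ord_enum x (Ordinal first_lt_T)).
by have := fail_upto_x (Ordinal first_lt_T); rewrite /= first_le_x => /negbTE ->.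
Qed.

(* On a failed block [first_success b = T], so each summand vanishes. *)
Lemma success_first_success_sum b :
  (success b)%:R * (first_success b)%:R
  = \sum_(x < T) ((x < first_success b)%N%:R - (~~ success b)%:R) :> R.
Proof.
have first_le_T : (first_success b <= T)%N by rewrite -[X in (_ <= X)%N]size_enum_ord find_size.
case: (boolP (success b)) => succ_b /=.
  under eq_bigr do rewrite subr0.
  rewrite mul1r -natr_sum; congr _%:R.
  rewrite -(big_mkord xpredT (fun i => nat_of_bool (i < first_success b)%N)).
  rewrite (big_cat_nat (leq0n _) first_le_T) /=.
  rewrite [X in (X + _)%N](eq_big_nat _ _ (F2 := fun=> 1%N)) => [|i /andP[_ ->]] //.
  rewrite [X in (_ + X)%N](eq_big_nat _ _ (F2 := fun=> 0%N)); last first.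
    by move=> i /andP[+ _]; rewrite leqNgt => /negbTE ->.
  by rewrite big1_eq addn0 sum_nat_const_nat muln1 subn0.
have -> : first_success b = T.
  rewrite /first_success hasNfind ?size_enum_ord //.
  by apply: contra succ_b => /hasP [t _ bt]; apply/existsP; exists t.
by rewrite mul0r big1 // => x _; rewrite ltn_ord subrr.
Qed.

Lemma sum_block_prob_first_success r :
  r * \sum_b block_prob r b * ((success b)%:R * (first_success b)%:R)
  = (1 - r) * (1 - (1 - r) ^+ T) - T%:R * r * (1 - r) ^+ T.
Proof.
have tail_prob (x : 'I_T) :
    \sum_b block_prob r b * (x < first_success b)%N%:R = (1 - r) ^+ x.+1.
  rewrite -(prod_ord_leq_const (1 - r) (ltn_ord x)) -(sum_block_prob_fail_on r (fun t => t <= x)%N).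
  by apply: eq_bigr => b _; rewrite ltn_first_success.
under eq_bigr do rewrite success_first_success_sum mulr_sumr.
rewrite exchange_big /=.
under eq_bigr do rewrite (eq_bigr _ (fun _ _ => mulrBr _ _ _)) sumrB tail_prob sum_block_prob_fail.
rewrite sumrB sumr_const card_ord mulrBr.
have := geometric_sum (1 - r) T; rewrite opprB addrC subrK => ->.
by rewrite -mulr_natl; ring.
Qed.

Lemma sum_block_prob_fits r c :
  \sum_b block_prob r b * (fits c (success b))%:R
  = constraint_prob ((1 - r) ^+ T) c.
Proof.
case: c => [[]|] /=.
- by under eq_bigr do rewrite eqb_id; exact: sum_block_prob_success.
- by under eq_bigr do rewrite eqbF_neg; exact: sum_block_prob_fail.
- by under eq_bigr do rewrite mulr1; exact: sum_block_prob.
Qed.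

End BlockProbability.

Section Outcomes.
Context {R : comNzRingType} {T : nat}.
Variable p : nat -> R.

Lemma sum_prob_prod k (F : 'I_k -> {ffun 'I_T -> bool} -> R) :
  \sum_(w : outcome k T) prob p w * \prod_j F j (w j)
  = \prod_(j < k) \sum_(b : {ffun 'I_T -> bool}) block_prob (p j.+1) b * F j b.
Proof. by rewrite bigA_distr_bigA; apply: eq_bigr => w _; rewrite big_split. Qed.

Lemma sum_prob_marginal k (j0 : 'I_k) (G : {ffun 'I_T -> bool} -> R) :
  \sum_(w : outcome k T) prob p w * G (w j0)
  = \sum_(b : {ffun 'I_T -> bool}) block_prob (p j0.+1) b * G b.
Proof.
transitivity (\sum_(w : outcome k T) prob p w * \prod_j (if j == j0 then G (w j) else 1)).
  by apply: eq_bigr => w _; rewrite -big_mkcond big_pred1_eq.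
rewrite (sum_prob_prod (fun j b => if j == j0 then G b else 1)) (bigD1 j0) //=.
rewrite [X in _ * X]big1 ?mulr1 => [|j /negbTE j_neq].
  by apply: eq_bigr => b _; rewrite eqxx.
by under eq_bigr do rewrite j_neq mulr1; exact: sum_block_prob.
Qed.

Lemma sum_prob_forall k (E : 'I_k -> pred {ffun 'I_T -> bool}) :
  \sum_(w : outcome k T) prob p w * [forall j, E j (w j)]%:R
  = \prod_(j < k) \sum_(b : {ffun 'I_T -> bool}) block_prob (p j.+1) b * (E j b)%:R.
Proof.
under eq_bigr do rewrite -(prod_indicator (fun j => E j (_ j))).
exact: sum_prob_prod.
Qed.

End Outcomes.

Lemma Z_succ k T (w : outcome k T) (j : 'I_k) : Z w j.+1 = success (w j).
Proof. by rewrite /Z valK. Qed.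

Definition kappa_constraint (k m i : nat) : option bool :=
  if (i == k) || (i == k - m)%N then Some true
  else if (k - m < i)%N then Some false else None.

(* When [m = k] the constrained block [k - m] is the virtual block [0], whose factor
   [1 - f 0] is [1] because block [0] never fails. *)
Lemma prod_constraint_prob (R : comNzRingType) (f : nat -> R) k m :
  (1 <= m <= k)%N -> f 0%N = 0 ->
  \prod_(j < k) constraint_prob (f j.+1) (kappa_constraint k m j.+1)
  = (1 - f (k - m)%N) * \prod_(k - m + 1 <= i < k) f i * (1 - f k).
Proof.
move=> m_range f0; set c := fun i => constraint_prob (f i) (kappa_constraint k m i).
have c0 : c 0%N = 1.
  by rewrite /c /kappa_constraint ltn0; case: ifP; rewrite //= f0 subr0.
rewrite -(big_mkord xpredT (fun j => c j.+1)).
have -> : \prod_(0 <= i < k) c i.+1 = \prod_(1 <= i < k.+1) c i by rewrite big_add1.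
rewrite -[LHS]mul1r -[X in X * _]c0 -big_ltn //.
rewrite (big_cat_nat (leq0n (k - m)) (leq_trans (leq_subr m k) (leqnSn k))).
rewrite [X in X * _ = _]big1_seq ?mul1r => [|i]; last first.
  rewrite mem_index_iota => i_lt; rewrite /c /kappa_constraint.
  by rewrite ifF; [rewrite ifF //; lia | lia].
rewrite big_ltn; last by lia.
rewrite big_nat_recr /=; last by lia.
rewrite mulrA addn1; congr (_ * _ * _).
- by rewrite /c /kappa_constraint eqxx orbT.
- apply: eq_big_nat => i i_range; rewrite /c /kappa_constraint.
  by rewrite ifF; [rewrite ifT //; lia | lia].
- by rewrite /c /kappa_constraint eqxx.
Qed.

Section LastBlock.
Variables (T n : nat).
Implicit Type w : outcome n.+1 T.

Lemma Z_last w : Z w n.+1 = success (w ord_max).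
Proof. exact: Z_succ w ord_max. Qed.

Lemma Xk_last w : Xk w = first_success (w ord_max).
Proof. by rewrite /Xk /= (valK ord_max). Qed.

Lemma kappa_bounds w : (1 <= kappa w <= n.+1)%N.
Proof.
have : has (fun m => Z w (n.+1 - m)) (iota 1 n.+1).
  by apply/hasP; exists n.+1; rewrite ?subnn // mem_iota leqnn.
by rewrite has_find size_iota => find_lt; rewrite /kappa find_lt.
Qed.

Lemma kappa_eqE w m : (1 <= m <= n.+1)%N ->
  (kappa w == m) = Z w (n.+1 - m) && all (fun x => ~~ Z w (n.+1 - x.+1)) (iota 0 m.-1).
Proof.
case: m => [//|m] /= m_le; rewrite /kappa eqSS (find_eq_nth _ 0%N) ?size_iota //.
rewrite nth_iota ?add1n //; congr (_ && _); apply: eq_in_all => x.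
by rewrite mem_iota => /andP[_ x_lt]; rewrite nth_iota ?add1n //; lia.
Qed.

Lemma Z_last_kappa_eq w m : (1 <= m <= n.+1)%N ->
  Z w n.+1 && (kappa w == m)
  = [forall j : 'I_n.+1, fits (kappa_constraint n.+1 m j.+1) (Z w j.+1)].
Proof.
move=> m_range; rewrite kappa_eqE //; apply/idP/forallP.
  case/and3P => Z_k Z_km /allP fail_between j; rewrite /kappa_constraint.
  case: ifP => [/orP[]/eqP -> | /norP[j_neq_k j_neq_km]]; rewrite /fits ?Z_k ?Z_km //.
  case: ifP => // j_gt; rewrite eqbF_neg.
  have := fail_between (n - j.+1)%N; rewrite mem_iota.
  have j_lt := ltn_ord j.
  have -> : (n.+1 - (n - j.+1).+1 = j.+1)%N by lia.
  by apply; lia.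
move=> fits_all.
have fits_at i : (0 < i <= n.+1)%N -> fits (kappa_constraint n.+1 m i) (Z w i).
  by case: i => // i /= i_lt; have := fits_all (inord i); rewrite inordK.
apply/and3P; split.
- by have := fits_at n.+1 (leqnn _); rewrite /kappa_constraint eqxx /fits => /eqP.
- have [-> // | km_gt0] := posnP (n.+1 - m).
  have := fits_at (n.+1 - m)%N; rewrite /kappa_constraint eqxx orbT /fits.
  by move=> /(_ _)/eqP; apply; lia.
- apply/allP => x; rewrite mem_iota => x_range.
  have := fits_at (n.+1 - x.+1)%N; rewrite /kappa_constraint ifF ?ifT /fits; [|lia|lia].
  by rewrite -eqbF_neg; apply; lia.
Qed.

End LastBlock.

Section LastBlockMoments.
Context {R : comNzRingType} {T : nat}.
Variables (p : nat -> R) (n : nat).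
Local Notation q := (qq p).

Lemma sum_prob_Z_last :
  \sum_(w : outcome n.+1 T | Z w n.+1) prob p w = 1 - q n.+1 ^+ T.
Proof.
rewrite sum_mkcond_indicator; under eq_bigr do rewrite Z_last.
by rewrite (sum_prob_marginal p ord_max (fun b => (success b)%:R)) sum_block_prob_success.
Qed.

Lemma sum_prob_Z_last_Xk :
  p n.+1 * \sum_(w : outcome n.+1 T) prob p w * ((Z w n.+1)%:R * (Xk w)%:R)
  = q n.+1 * (1 - q n.+1 ^+ T) - T%:R * p n.+1 * q n.+1 ^+ T.
Proof.
under eq_bigr do rewrite Z_last Xk_last.
rewrite (sum_prob_marginal p ord_max (fun b => (success b)%:R * (first_success b)%:R)).
exact: sum_block_prob_first_success.
Qed.

Lemma sum_prob_Z_last_kappa_eq m : (0 < T)%N -> (1 <= m <= n.+1)%N ->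
  \sum_(w : outcome n.+1 T) prob p w * (Z w n.+1 && (kappa w == m))%:R
  = (1 - q (n.+1 - m) ^+ T) * \prod_(n.+1 - m + 1 <= i < n.+1) q i ^+ T
    * (1 - q n.+1 ^+ T).
Proof.
move=> T_gt0 m_range.
rewrite (eq_bigr (fun w => prob p w *
    [forall j : 'I_n.+1, fits (kappa_constraint n.+1 m j.+1) (success (w j))]%:R)); last first.
  move=> w _; rewrite Z_last_kappa_eq //; congr (_ * _%:R).
  by under eq_forallb => j do rewrite Z_succ.
rewrite (sum_prob_forall p (fun j b => fits (kappa_constraint n.+1 m j.+1) (success b))).
rewrite (eq_bigr _ (fun j _ => sum_block_prob_fits _ _)).
by rewrite -(prod_constraint_prob (f := fun i => q i ^+ T)) // expr0n eqn0Ngt T_gt0.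
Qed.

Lemma sum_prob_Z_last_kappa : (0 < T)%N ->
  \sum_(w : outcome n.+1 T) prob p w * ((Z w n.+1)%:R * (kappa w)%:R)
  = (\sum_(1 <= m < n.+2) m%:R * (1 - q (n.+1 - m) ^+ T)
        * \prod_(n.+1 - m + 1 <= i < n.+1) q i ^+ T) * (1 - q n.+1 ^+ T).
Proof.
move=> T_gt0.
under eq_bigr => w _ do rewrite (natr_sum_indicator (kappa_bounds w)) !mulr_sumr.
rewrite exchange_big mulr_suml; apply: eq_big_nat => m m_range.
transitivity (m%:R * \sum_(w : outcome n.+1 T) prob p w * (Z w n.+1 && (kappa w == m))%:R).
  rewrite mulr_sumr; apply: eq_bigr => w _.
  by rewrite -mulnb natrM [_ * (m%:R * _)]mulrCA [LHS]mulrCA.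
by rewrite sum_prob_Z_last_kappa_eq // !mulrA.
Qed.

Lemma sum_prob_peakAoI :
  \sum_(w : outcome n.+1 T | Z w n.+1) prob p w * (peakAoI w)%:R
  = T%:R * \sum_(w : outcome n.+1 T) prob p w * ((Z w n.+1)%:R * (kappa w)%:R)
    + \sum_(w : outcome n.+1 T) prob p w * ((Z w n.+1)%:R * (Xk w)%:R)
    + \sum_(w : outcome n.+1 T | Z w n.+1) prob p w.
Proof.
rewrite [LHS]sum_mkcond_indicator [X in _ + X]sum_mkcond_indicator mulr_sumr -!big_split.
apply: eq_bigr => w _ /=.
rewrite /peakAoI natrD natrD natrM.
by move: (prob p w) (Z w n.+1)%:R (kappa w)%:R (Xk w)%:R => P z K X; ring.
Qed.

End LastBlockMoments.

Theorem theorem3 (R : realFieldType) (T k : nat) (p : nat -> R)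
  (hT : (0 < T)%N) (hk : (0 < k)%N)
  (hp : forall i, (1 <= i <= k)%N -> 0 < p i <= 1) :
  Theta_pa k T p =
    T%:R * (\sum_(1 <= m < k.+1)
              m%:R * (1 - qq p (k - m) ^+ T)
                   * \prod_(k - m + 1 <= i < k) qq p i ^+ T)
    + (qq p k / p k - T%:R * qq p k ^+ T / (1 - qq p k ^+ T)) + 1.
Proof.
case: k hk hp => [//|n] _ hp.
have /andP[p_gt0 p_le1] := hp n.+1 (leqnn _).
have p_neq0 : p n.+1 != 0 by rewrite gt_eqF.
have qT_lt1 : qq p n.+1 ^+ T < 1.
  by rewrite exprn_ilt1 -?lt0n //= ?subr_ge0 // ltrBlDr ltrDl.
have Z_prob_neq0 : 1 - qq p n.+1 ^+ T != 0 by rewrite subr_eq0 eq_sym lt_eqF.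
rewrite /Theta_pa sum_prob_peakAoI sum_prob_Z_last sum_prob_Z_last_kappa //.
rewrite -[X in _ + X + _](mulKf p_neq0) sum_prob_Z_last_Xk.
by field; rewrite Z_prob_neq0 p_neq0.
Qed.
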